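(* Let $\Sigma=\{\sigma_0,\sigma_1,\sigma_2\}$ and consider two users with confusion graphs $G_1=(\Sigma,\{\sigma_0\sigma_1\})$ and $G_2=(\Sigma,\{\sigma_0\sigma_2\})$. Then the following rate vectors are optimal: (i) $(R_1,H(R_1))$ for $R_1\in[1/2,2/3]$; (ii) $(R_1,\log_2 3-R_1)$ for $R_1\in[2/3,\log_2 3-2/3]$; (iii) $(H(R_2),R_2)$ for $R_2\in[1/2,2/3]$.
   Context: $H(x)=-x\log_2 x-(1-x)\log_2(1-x)$ is the binary entropy function. Setting: a sender broadcasts a word of length $n$ over a finite alphabet $\Sigma$ to users; user $i$ has a confusion graph $G_i$ on $\Sigma$, where $ab$ is an edge iff user $i$ cannot distinguish $a$ and $b$. Words $x,y\in\Sigma^n$ are distinguishable by user $i$ if some coordinate $t$ has $x_t\neq y_t$ and $x_ty_t$ not an edge of $G_i$. A vector $(m_1,m_2)$ is feasible for length $n$ if there is $E:[m_1]\times[m_2]\to\Sigma^n$ such that for each $i$ and tuples $a,a'$ with $a_i\neq a'_i$, $E(a),E(a')$ are distinguishable by user $i$. A rate vector $(R_1,R_2)$ is feasible if there are feasible vectors for lengths $n\to\infty$ with $R_i=\lim\frac{\log_2 m_i^{(n)}}{n}$. A rate vector is optimal if it is feasible and no user can increase his rate while the other user keeps the same rate. *)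

From Stdlib Require Import Reals.
From mathcomp Require Import all_boot.

Set Implicit Arguments.
Unset Strict Implicit.

Definition Sigma := 'I_3.
Definition s0 : Sigma := @Ordinal 3 0 isT.
Definition s1 : Sigma := @Ordinal 3 1 isT.
Definition s2 : Sigma := @Ordinal 3 2 isT.

Definition graph := Sigma -> Sigma -> Prop.

Definition G1 : graph := fun a b => (a = s0 /\ b = s1) \/ (a = s1 /\ b = s0).
Definition G2 : graph := fun a b => (a = s0 /\ b = s2) \/ (a = s2 /\ b = s0).

Definition word (n : nat) := 'I_n -> Sigma.

Definition distinguishable (G : graph) (n : nat) (x y : word n) : Prop :=
  exists t : 'I_n, x t <> y t /\ ~ G (x t) (y t).

(* (m1, m2) feasible for length n (two users with graphs Ga, Gb);
   [m] = 'I_m, and we require m_i >= 1 so that log2 m_i is meaningful. *)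
Definition feasible_vec (Ga Gb : graph) (n m1 m2 : nat) : Prop :=
  (0 < m1)%N /\ (0 < m2)%N /\
  exists E : 'I_m1 -> 'I_m2 -> word n,
    (forall (a1 a1' : 'I_m1) (a2 a2' : 'I_m2), a1 <> a1' ->
        distinguishable Ga (E a1 a2) (E a1' a2')) /\
    (forall (a1 a1' : 'I_m1) (a2 a2' : 'I_m2), a2 <> a2' ->
        distinguishable Gb (E a1 a2) (E a1' a2')).

Local Open Scope R_scope.
Definition log2 (x : R) : R := ln x / ln 2.

Definition Hb (x : R) : R := - x * log2 x - (1 - x) * log2 (1 - x).

Definition feasible_rate (Ga Gb : graph) (R1 R2 : R) : Prop :=
  exists (len m1 m2 : nat -> nat),
    (forall k, feasible_vec Ga Gb (len k) (m1 k) (m2 k)) /\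
    (forall k, (len k < len k.+1)%N) /\
    Un_cv (fun k => (log2 (INR (m1 k)) / INR (len k))) R1 /\
    Un_cv (fun k => (log2 (INR (m2 k)) / INR (len k))) R2.

Definition optimal_rate (Ga Gb : graph) (R1 R2 : R) : Prop :=
  feasible_rate Ga Gb R1 R2 /\
  (forall r, R1 < r -> ~ feasible_rate Ga Gb r R2) /\
  (forall r, R2 < r -> ~ feasible_rate Ga Gb R1 r).

From Stdlib Require Import Reals Lra Lia ZArith.
From mathcomp Require Import all_boot zify.

Set Implicit Arguments.
Unset Strict Implicit.
Unset Printing Implicit Defensive.

(* A word x is determined by its sets [occ s2 x] and [occ s1 x] of positions carrying s2 and s1;
   user 1 tells two words apart exactly when their s2-sets differ, user 2 when their s1-sets
   differ.  A code thus gives user 2 a set B per message and user 1 a subset of the complement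
   of B per pair of messages.

   Achievability: user 2 uses the b-subsets B, and the subsets of the positions are coloured
   with 2^e colours so that the powerset of every complement of a b-subset sees every colour;
   a union bound over all colourings works once e is about n - b - log n.  This gives the
   rates (1 - beta, H(beta)), and time sharing between (2/3, H(2/3)) and its mirror image
   fills the segment R1 + R2 = log2 3.

   Converse: the most frequent weight w = |B| among the cells of a code gives
   m1 m2 <= (n+1) C(n,w) min(2^(n-w), m1).  Weighting the logarithms of the two resulting
   bounds by D and 1 - D, where D = log2 (x / (1 - x)) lies in [0,1] for 1/2 <= x <= 2/3, and
   using C(n,w) x^(n-w) (1-x)^w <= 1 yields the supporting line D R1 + R2 <= - log2 (1 - x)
   of the curve (x, H(x)); at x = 2/3 it reads R1 + R2 <= log2 3.  The third family follows
   by exchanging s1 and s2. *)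

(** * Words, occupation sets and codes *)

Lemma Sigma_cases (a : Sigma) : [\/ a = s0, a = s1 | a = s2].
Proof.
case: a => [[|[|[|m]]] Ha] //; [apply: Or31 | apply: Or32 | apply: Or33]; exact: val_inj.
Qed.

Definition occ n (c : Sigma) (x : word n) : {set 'I_n} := [set t | x t == c].

Lemma distinguishable_occ (G : graph) (c : Sigma) :
  (forall u v, u <> v -> (G u v <-> u <> c /\ v <> c)) ->
  forall n (x y : word n), distinguishable G x y <-> occ c x <> occ c y.
Proof.
move=> HG n x y; split.
- case=> t [neq nG] /setP /(_ t); rewrite !inE.
  have [xc|xc] := eqVneq (x t) c; have [yc|yc] := eqVneq (y t) c => //= _.
  + by apply: neq; rewrite xc yc.
  + by apply: nG; apply/HG => //; split; apply/eqP.
- move=> ne; case: (pickP [pred t | (x t == c) != (y t == c)]) => [t /= xyt | same]; last first.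
    by case: ne; apply/setP => t; rewrite !inE; move: (same t) => /= /negbFE/eqP.
  have neq : x t <> y t by move=> xy; rewrite xy eqxx in xyt.
  exists t; split=> // /(HG _ _ neq) [/eqP xc /eqP yc].
  by rewrite (negbTE xc) (negbTE yc) in xyt.
Qed.

Lemma G1_edge u v : u <> v -> (G1 u v <-> u <> s2 /\ v <> s2).
Proof.
rewrite /G1.
by case: (Sigma_cases u) => ->; case: (Sigma_cases v) => ->; rewrite /s0 /s1 /s2;
  intuition congruence.
Qed.

Lemma G2_edge u v : u <> v -> (G2 u v <-> u <> s1 /\ v <> s1).
Proof.
rewrite /G2.
by case: (Sigma_cases u) => ->; case: (Sigma_cases v) => ->; rewrite /s0 /s1 /s2;
  intuition congruence.
Qed.

Lemma distinguishable_G1 n (x y : word n) :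
  distinguishable G1 x y <-> occ s2 x <> occ s2 y.
Proof. exact: (distinguishable_occ G1_edge). Qed.

Lemma distinguishable_G2 n (x y : word n) :
  distinguishable G2 x y <-> occ s1 x <> occ s1 y.
Proof. exact: (distinguishable_occ G2_edge). Qed.

Definition is_code (Ga Gb : graph) n (A1 A2 : Type) (E : A1 -> A2 -> word n) :=
  (forall a1 a1' a2 a2', a1 <> a1' -> distinguishable Ga (E a1 a2) (E a1' a2')) /\
  (forall a1 a1' a2 a2', a2 <> a2' -> distinguishable Gb (E a1 a2) (E a1' a2')).

Lemma feasible_vec_code (Ga Gb : graph) n (A1 A2 : finType) (E : A1 -> A2 -> word n) :
  0 < #|A1| -> 0 < #|A2| -> is_code Ga Gb E -> feasible_vec Ga Gb n #|A1| #|A2|.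
Proof.
move=> A1_gt0 A2_gt0 [E1 E2]; do 2!split=> //.
exists (fun i j => E (enum_val i) (enum_val j)); split=> i i' j j' neq.
- by apply: E1 => /enum_val_inj.
- by apply: E2 => /enum_val_inj.
Qed.

Definition catw n n' (x : word n) (y : word n') : word (n + n') :=
  fun t => match split t with inl i => x i | inr j => y j end.

Lemma distinguishable_catw (G : graph) n n' (x x' : word n) (y y' : word n') :
  distinguishable G x x' \/ distinguishable G y y' ->
  distinguishable G (catw x y) (catw x' y').
Proof.
case=> [[i Hi]|[j Hj]].
- by exists (lshift n' i); rewrite /catw (unsplitK (inl _ i)).
- by exists (rshift n j); rewrite /catw (unsplitK (inr _ j)).
Qed.

Lemma feasible_vec_mul (Ga Gb : graph) n n' m1 m2 m1' m2' :
  feasible_vec Ga Gb n m1 m2 -> feasible_vec Ga Gb n' m1' m2' ->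
  feasible_vec Ga Gb (n + n') (m1 * m1') (m2 * m2').
Proof.
case=> m1_gt0 [m2_gt0 [E [E1 E2]]] [m1'_gt0 [m2'_gt0 [E' [E1' E2']]]].
have card_pair m m' : #|{: 'I_m * 'I_m'}| = m * m' by rewrite card_prod !card_ord.
rewrite -!card_pair.
apply: (feasible_vec_code (E := fun a b => catw (E a.1 b.1) (E' a.2 b.2)));
  rewrite ?card_pair ?muln_gt0 ?m1_gt0 ?m2_gt0 //.
split=> p p' q q' /= neq; apply: distinguishable_catw.
- have [eq1|] := eqVneq p.1 p'.1; last by left; apply: E1; apply/eqP.
  by right; apply: E1' => eq2; apply: neq; apply: injective_projections.
- have [eq1|] := eqVneq q.1 q'.1; last by left; apply: E2; apply/eqP.
  by right; apply: E2' => eq2; apply: neq; apply: injective_projections.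
Qed.

Definition swap12 (a : Sigma) : Sigma :=
  if a == s1 then s2 else if a == s2 then s1 else a.

Lemma swap12K : involutive swap12.
Proof. by move=> a; rewrite /swap12; case: (Sigma_cases a) => ->. Qed.

Lemma occ_swap12 n c (x : word n) : occ (swap12 c) (swap12 \o x) = occ c x.
Proof. by apply/setP => t; rewrite !inE (inj_eq (inv_inj swap12K)). Qed.

Lemma feasible_vec_swap n m1 m2 :
  feasible_vec G1 G2 n m1 m2 -> feasible_vec G1 G2 n m2 m1.
Proof.
case=> m1_gt0 [m2_gt0 [E [E1 E2]]]; do 2!split=> //.
have swap_s1 : swap12 s1 = s2 by [].
have swap_s2 : swap12 s2 = s1 by [].
exists (fun a2 a1 => swap12 \o E a1 a2); split=> a2 a2' a1 a1' neq.
- by apply/distinguishable_G1; rewrite -swap_s1 !occ_swap12; apply/distinguishable_G2/E2.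
- by apply/distinguishable_G2; rewrite -swap_s2 !occ_swap12; apply/distinguishable_G1/E1.
Qed.

(** * Codes from polychromatic colourings *)

Lemma card_bigcup_le (T I : finType) (S : I -> {set T}) :
  #|\bigcup_i S i| <= \sum_i #|S i|.
Proof.
apply: (big_ind2 (fun (A : {set T}) k => #|A| <= k)) => [|A k B l leAk leBl|//].
  by rewrite cards0.
by rewrite cardsU (leq_trans (leq_subr _ _)) // leq_add.
Qed.

Lemma exists_notin_bigcup (T I : finType) (S : I -> {set T}) :
  \sum_i #|S i| < #|T| -> exists x, forall i, x \notin S i.
Proof.
move=> small; have : 0 < #|~: \bigcup_i S i|.
  by rewrite -(cardsC (\bigcup_i S i)) in small; rewrite -(ltn_add2l #|\bigcup_i S i|) addn0
    (leq_ltn_trans (card_bigcup_le S)).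
case/card_gt0P=> x; rewrite inE => xS; exists x => i.
by apply: contra xS => xSi; apply/bigcupP; exists i.
Qed.

Lemma expn_le_base m n e : m <= n -> m ^ e <= n ^ e.
Proof. by case: e => [//|e] le_mn; rewrite leq_exp2r. Qed.

Lemma expn_pred_mixed_le c d k N :
  d <= k <= N -> c.-1 ^ k * c ^ (N - k) <= c.-1 ^ d * c ^ (N - d).
Proof.
case/andP=> dk kN; rewrite (_ : N - d = (k - d) + (N - k)); last by lia.
rewrite -{1}(subnKC dk) !expnD -!mulnA leq_mul2l leq_mul2r.
by rewrite expn_le_base ?leq_pred ?orbT.
Qed.

Lemma card_ffun_avoiding (U : finType) c (D : {set U}) (j : 'I_c) :
  #|[set f : {ffun U -> 'I_c} | [forall u in D, f u != j]]|
    = c.-1 ^ #|D| * c ^ (#|U| - #|D|).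
Proof.
pose F (u : U) : pred 'I_c := if u \in D then predC1 j else predT.
have -> : #|[set f : {ffun U -> 'I_c} | [forall u in D, f u != j]]| = #|family F|.
  apply: eq_card => f; rewrite inE; apply/forall_inP/familyP => fj u; move: (fj u);
    by rewrite /F; case: (u \in D) => //= fu; rewrite !inE ?fu // fu.
rewrite card_family foldrE big_map big_enum (bigID (mem D)) /=.
rewrite (eq_bigr (fun _ => c.-1)) => [|u uD]; last by rewrite /F uD cardC1 card_ord.
rewrite [X in _ * X](eq_bigr (fun _ => c)) => [|u uD]; last by rewrite /F (negbTE uD) card_ord.
rewrite !prod_nat_const; congr (_ * c ^ _).
by rewrite -(cardC (mem D)) addKn.
Qed.

(* Union bound over the colourings that miss some colour on some [nb l]. *)
Lemma exists_polychromatic_coloring (U L : finType) (nb : L -> {set U}) c d :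
  0 < c -> (forall l, d <= #|nb l|) -> #|L| * c * c.-1 ^ d < c ^ d ->
  exists f : {ffun U -> 'I_c}, forall l (j : 'I_c), exists2 u, u \in nb l & f u = j.
Proof.
move=> c_gt0 d_le small.
pose bad (p : L * 'I_c) := [set f : {ffun U -> 'I_c} | [forall u in nb p.1, f u != p.2]].
suff [f fP] : exists f, forall p, f \notin bad p.
  exists f => l j; move: (fP (l, j)); rewrite inE negb_forall => /existsP [u].
  by rewrite negb_imply negbK => /andP [un /eqP fu]; exists u.
apply: exists_notin_bigcup.
have [L0 | /card_gt0P [l0 _]] := posnP #|L|.
  rewrite big1 ?card_ffun ?card_ord ?expn_gt0 ?c_gt0 // => -[l j].
  by have := card0_eq L0 l.
have d_le_U : d <= #|U| := leq_trans (d_le l0) (max_card _).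
have bad_le p : #|bad p| <= c.-1 ^ d * c ^ (#|U| - d).
  by rewrite card_ffun_avoiding expn_pred_mixed_le // d_le max_card.
apply: (@leq_ltn_trans (\sum_(p : L * 'I_c) c.-1 ^ d * c ^ (#|U| - d))).
  by apply: leq_sum => p _; apply: bad_le.
rewrite sum_nat_const card_prod card_ord card_ffun card_ord -{2}(subnKC d_le_U) expnD.
by rewrite mulnA ltn_pmul2r // expn_gt0 c_gt0.
Qed.

Definition mkword n (A B : {set 'I_n}) : word n :=
  fun t => if t \in B then s1 else if t \in A then s2 else s0.

Lemma occ_mkword_s2 n (A B : {set 'I_n}) : A \subset ~: B -> occ s2 (mkword A B) = A.
Proof.
move=> /subsetP AB; apply/setP => t; rewrite !inE /mkword.
case: ifP => [tB|_]; last by case: (t \in A).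
by apply/esym/negP => /AB; rewrite inE tB.
Qed.

Lemma occ_mkword_s1 n (A B : {set 'I_n}) : occ s1 (mkword A B) = B.
Proof. by apply/setP => t; rewrite !inE /mkword; case: (t \in B); case: (t \in A). Qed.

Lemma feasible_vec_coloring n (A1 A2 : finType) (B : A2 -> {set 'I_n})
    (f : {set 'I_n} -> A1) :
  0 < #|A1| -> 0 < #|A2| -> injective B ->
  (forall a1 a2, exists2 A : {set 'I_n}, A \subset ~: B a2 & f A = a1) ->
  feasible_vec G1 G2 n #|A1| #|A2|.
Proof.
move=> A1_gt0 A2_gt0 B_inj colorful.
pose Aof a1 a2 := odflt set0 [pick A : {set 'I_n} | (A \subset ~: B a2) && (f A == a1)].
have AofP a1 a2 : Aof a1 a2 \subset ~: B a2 /\ f (Aof a1 a2) = a1.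
  rewrite /Aof; case: pickP => [A /andP [AB /eqP <-] // | none].
  by case: (colorful a1 a2) => A AB fA; move: (none A); rewrite AB fA eqxx.
apply: (feasible_vec_code (E := fun a1 a2 => mkword (Aof a1 a2) (B a2))) => //.
split=> a1 a1' a2 a2' neq.
- apply/distinguishable_G1; have [AB fA] := AofP a1 a2; have [AB' fA'] := AofP a1' a2'.
  by rewrite !occ_mkword_s2 // => eqA; apply: neq; rewrite -fA -fA' eqA.
- by apply/distinguishable_G2; rewrite !occ_mkword_s1 => /B_inj.
Qed.

Lemma leq_bernoulli x m : x ^ m.+1 + m.+1 * x ^ m <= (x + 1) ^ m.+1.
Proof.
elim: m => [|m IH]; first by rewrite expn1 expn0 mul1n.
rewrite !(expnS _ m.+1) !expnS in IH *; nia.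
Qed.

Lemma expn_pred_self c : 0 < c -> 2 * c.-1 ^ c <= c ^ c.
Proof.
case: c => [//|c] _ /=; have := leq_bernoulli c c; rewrite addn1; apply: leq_trans.
by rewrite mul2n -addnn leq_add2l expnS leq_mul2r leqnSn orbT.
Qed.

Lemma coloring_count_lt L c t : 1 < c -> L * c < 2 ^ 2 ^ t ->
  L * c * c.-1 ^ (c * 2 ^ t) < c ^ (c * 2 ^ t).
Proof.
move=> c_gt1 small; apply: (@leq_trans (2 ^ 2 ^ t * c.-1 ^ (c * 2 ^ t))).
  by rewrite ltn_pmul2r // expn_gt0 -subn1 subn_gt0 c_gt1.
by rewrite !expnM -expnMn expn_le_base // expn_pred_self // ltnW.
Qed.

Lemma feasible_vec_binomial n b e :
  b + e <= n -> (0 < e -> 2 * n < 2 ^ (n - b - e)) ->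
  feasible_vec G1 G2 n (2 ^ e) 'C(n, b).
Proof.
move=> bne small_t; have b_le_n : b <= n by lia.
pose L := {B : {set 'I_n} | #|B| == b}.
have cardL : #|{: L}| = 'C(n, b).
  by rewrite card_sig -[n in 'C(n, _)]card_ord -card_draws; apply: eq_card => B; rewrite !inE.
have cardL_le : #|{: L}| <= 2 ^ n.
  by rewrite card_sig (leq_trans (max_card _)) // -cardsT -powersetT card_powerset cardsT card_ord.
pose c := 2 ^ e; pose d := 2 ^ (n - b).
have c_gt0 : 0 < c by rewrite expn_gt0.
have d_le (B : L) : d <= #|powerset (~: val B)|.
  by rewrite card_powerset cardsCs setCK card_ord (eqP (valP B)).
have small : #|{: L}| * c * c.-1 ^ d < c ^ d.
  have [e0 | /[dup] e_gt0 /small_t {}small_t] := posnP e.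
    by rewrite /c /d e0 expn0 /= exp1n exp0n ?muln0 ?expn_gt0.
  rewrite (_ : d = c * 2 ^ (n - b - e)); last by rewrite /d /c -expnD subnKC //; lia.
  apply: coloring_count_lt; first by rewrite /c -{1}(expn0 2) ltn_exp2l.
  apply: (@leq_ltn_trans (2 ^ n * 2 ^ n)).
    by apply: leq_mul => //; rewrite /c leq_pexp2l //; lia.
  by rewrite -expnD ltn_exp2l // addnn -mul2n.
have [f colorful] := exists_polychromatic_coloring c_gt0 d_le small.
rewrite -cardL -[2 ^ e](card_ord c).
apply: (feasible_vec_coloring (B := val) (f := f)); rewrite ?card_ord ?cardL ?bin_gt0 ?b_le_n //.
  exact: val_inj.
by move=> a1 B; have [A] := colorful B a1; rewrite powersetE; exists A.
Qed.

(** * Counting bound for codes *)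

Lemma card_le_fibers (T K : finType) (g : T -> K) (S : {set T}) (P : {set K}) k :
  {in S, forall x, g x \in P} ->
  (forall y, y \in P -> #|[set x in S | g x == y]| <= k) -> #|S| <= #|P| * k.
Proof.
move=> gP fiber_le; rewrite -sum1_card (partition_big g (mem P)) //=.
rewrite -sum_nat_const; apply: leq_sum => y yP.
apply: leq_trans (fiber_le y yP); rewrite -sum1_card; apply: eq_leq.
by apply: eq_bigl => x; rewrite !inE.
Qed.

Lemma pigeonhole_fiber (T K : finType) (g : T -> K) (y0 : K) :
  exists y, #|T| <= #|K| * #|[set x | g x == y]|.
Proof.
pose fiber y := [set x | g x == y].
exists [arg max_(y > y0) #|fiber y|]; case: arg_maxnP => // y _ y_max.
have := @card_le_fibers _ _ g [set: T] [set: K] #|fiber y|.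
rewrite !cardsT; apply=> [x _ | z _]; first by rewrite inE.
by rewrite (leq_trans _ (y_max z isT)) // subset_leq_card //; apply/subsetP => x; rewrite !inE.
Qed.

Lemma leq_card_in_sub (T T' : finType) (f : T -> T') (S : {set T}) (D : {set T'}) :
  {in S &, injective f} -> {in S, forall x, f x \in D} -> #|S| <= #|D|.
Proof.
move=> f_inj fD; rewrite -(card_in_imset f_inj) subset_leq_card //.
by apply/subsetP => _ /imsetP [x xS ->]; apply: fD.
Qed.

Lemma code_occ_inj n (A1 A2 : eqType) (E : A1 -> A2 -> word n) a1 a1' a2 a2' :
  is_code G1 G2 E -> occ s1 (E a1 a2) = occ s1 (E a1' a2') ->
  a2 = a2' /\ (occ s2 (E a1 a2) = occ s2 (E a1' a2') -> a1 = a1').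
Proof.
move=> [E1 E2] eq1; have eq2 : a2 = a2'.
  by apply/eqP; apply: contraT => /eqP /(E2 a1 a1') /distinguishable_G2 /(_ eq1).
split=> // eq12; apply/eqP; apply: contraT => /eqP /(E1 _ _ a2 a2') /distinguishable_G1.
by move/(_ eq12).
Qed.

(* Within the most frequent weight class of s1-sets, a cell is determined both by its s1-set
   and s2-set, and by its s1-set and its first message. *)
Lemma feasible_vec_weight_bound n m1 m2 : feasible_vec G1 G2 n m1 m2 ->
  exists2 w, w <= n & m1 * m2 <= n.+1 * ('C(n, w) * minn (2 ^ (n - w)) m1).
Proof.
case=> _ [_ [E codeE]].
pose B (p : 'I_m1 * 'I_m2) := occ s1 (E p.1 p.2).
pose wt p : 'I_n.+1 := inord #|B p|.
have wtE p : wt p = #|B p| :> nat.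
  by rewrite inordK // ltnS -[X in _ <= X](card_ord n) max_card.
have [w class_large] := pigeonhole_fiber wt ord0.
rewrite card_prod !card_ord in class_large.
exists w; first by rewrite -ltnS.
rewrite (leq_trans class_large) // leq_mul2l; apply/orP; right.
have -> : 'C(n, w) = #|[set B : {set 'I_n} | #|B| == w]| by rewrite card_draws card_ord.
apply: card_le_fibers => [p | Bs]; rewrite !inE.
  by move=> /eqP <-; rewrite wtE.
move=> /eqP cardBs; rewrite leq_min; apply/andP; split.
- have -> : 2 ^ (n - w) = #|powerset (~: Bs)|.
    by rewrite card_powerset cardsCs setCK card_ord cardBs.
  apply: (@leq_card_in_sub _ _ (fun p => occ s2 (E p.1 p.2))) => [[a1 a2] [a1' a2'] | p].
    rewrite !inE => /andP [_ /eqP B1] /andP [_ /eqP B2] /= eqA.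
    have [/= eq2 eq1] := code_occ_inj codeE (etrans B1 (esym B2)).
    by rewrite (eq1 eqA) eq2.
  rewrite !inE => /andP [_ /eqP <-].
  by apply/subsetP => t; rewrite !inE => /eqP ->.
- rewrite -[m1 in _ <= m1](card_ord m1) -cardsT.
  apply: (@leq_card_in_sub _ _ (fun p => p.1)) => [[a1 a2] [a1' a2'] | p _]; last by rewrite inE.
  rewrite !inE => /andP [_ /eqP B1] /andP [_ /eqP B2] /= eqA.
  by have [/= -> _] := code_occ_inj codeE (etrans B1 (esym B2)); rewrite eqA.
Qed.

Open Scope R_scope.

(** * Binomial masses and entropy *)

Lemma INR_muln m n : INR (m * n)%N = INR m * INR n.
Proof. by rewrite -multE mult_INR. Qed.

Lemma INR_addn m n : INR (m + n)%N = INR m + INR n.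
Proof. by rewrite -plusE plus_INR. Qed.

Lemma INR_subn m n : (n <= m)%N -> INR (m - n)%N = INR m - INR n.
Proof. by move=> le_nm; rewrite -minusE minus_INR //; apply/leP. Qed.

Lemma INR_expn m n : INR (m ^ n)%N = INR m ^ n.
Proof. by elim: n => // n IH; rewrite expnS INR_muln IH. Qed.

Lemma INR_leq m n : (m <= n)%N -> INR m <= INR n.
Proof. by move/leP; apply: le_INR. Qed.

Lemma INR_gt0 m : (0 < m)%N -> 0 < INR m.
Proof. by move/ltP; apply: lt_0_INR. Qed.

Lemma INR_bin n k : (k <= n)%N -> INR 'C(n, k) = Binomial.C n k.
Proof.
have C_n0 m : Binomial.C m 0 = 1.
  by rewrite /Binomial.C Nat.sub_0_r /=; field; apply: INR_fact_neq_0.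
have C_nn m : Binomial.C m m = 1.
  by rewrite /Binomial.C Nat.sub_diag /=; field; apply: INR_fact_neq_0.
elim: n k => [|n IH] [|k] kn //; rewrite ?C_n0 ?bin0 //.
have [kn' | ] := ltnP k n; last first.
  rewrite ltnS in kn => nk; have -> : k = n by apply/eqP; rewrite eqn_leq kn.
  by rewrite binn C_nn.
by rewrite binS INR_addn !IH ?(ltnW kn') // Rplus_comm pascal //; apply/ltP.
Qed.

Definition bin_mass (p : R) (n k : nat) : R := INR 'C(n, k) * p ^ k * (1 - p) ^ (n - k)%N.

Lemma bin_mass_ge0 p n k : 0 <= p <= 1 -> 0 <= bin_mass p n k.
Proof.
move=> p01; apply: Rmult_le_pos; [apply: Rmult_le_pos|]; try apply: pow_le; try lra.
exact: pos_INR.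
Qed.

Lemma bin_mass_gt0 p n k : 0 < p < 1 -> (k <= n)%N -> 0 < bin_mass p n k.
Proof.
move=> p01 kn; apply: Rmult_lt_0_compat; [apply: Rmult_lt_0_compat|]; try apply: pow_lt; try lra.
by apply: INR_gt0; rewrite bin_gt0.
Qed.

Lemma bin_mass_sum p n : sum_f_R0 (bin_mass p n) n = 1.
Proof.
have -> : 1 = (p + (1 - p)) ^ n by rewrite Rplus_minus pow1.
rewrite Binomial.binomial.
by apply: PartSum.sum_eq => k /leP kn; rewrite /bin_mass INR_bin.
Qed.

Lemma sum_f_R0_ge_term (f : nat -> R) N k :
  (forall i, 0 <= f i) -> (k <= N)%N -> f k <= sum_f_R0 f N.
Proof.
move=> f_ge0; elim: N => [|N IH]; first by rewrite leqn0 => /eqP ->; apply: Rle_refl.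
rewrite leq_eqVlt ltnS => /orP [/eqP -> | /IH kN] /=.
  by have := cond_pos_sum f N f_ge0; lra.
by have := f_ge0 N.+1; lra.
Qed.

Lemma bin_mass_le1 p n k : 0 <= p <= 1 -> (k <= n)%N -> bin_mass p n k <= 1.
Proof.
by move=> p01 kn; rewrite -(bin_mass_sum p n); apply: sum_f_R0_ge_term => // i;
  apply: bin_mass_ge0.
Qed.

Lemma bin_mass_ratio p n k : (k < n)%N ->
  bin_mass p n k.+1 * (INR k + 1) * (1 - p) = bin_mass p n k * (INR n - INR k) * p.
Proof.
move=> kn; have := congr1 INR (mul_bin_left n k).
rewrite !INR_muln INR_subn ?(ltnW kn) // S_INR => bin_rec.
rewrite /bin_mass -(subnSK kn) /=.
transitivity ((INR k + 1) * INR 'C(n, k.+1) * (p ^ k * (1 - p) ^ (n - k.+1) * p * (1 - p)));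
  [ring | rewrite bin_rec; ring].
Qed.

Lemma bin_mass_mode n b k : (0 < b)%N -> (b < n)%N -> (k <= n)%N ->
  bin_mass (INR b / INR n) n k <= bin_mass (INR b / INR n) n b.
Proof.
move=> b_gt0 bn kn.
have n_gt0 : 0 < INR n by apply: INR_gt0; lia.
have bR : 1 <= INR b by have := INR_leq b_gt0.
have bnR : INR b + 1 <= INR n by rewrite -S_INR; apply: INR_leq.
set p := INR b / INR n.
have np : INR n * p = INR b by rewrite /p; field; lra.
have p01 : 0 < p < 1.
  split; first by apply: Rdiv_lt_0_compat; lra.
  by apply: (Rmult_lt_reg_l (INR n)); lra.
pose f i := bin_mass p n i.
have f_ge0 i : 0 <= f i by apply: bin_mass_ge0; lra.
have step i : (i < n)%N -> f i.+1 * (INR i + 1) * (1 - p) = f i * (INR n - INR i) * p.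
  exact: bin_mass_ratio.
have up : {in [pred i | i <= b]%N &, {homo f : i j / (i <= j)%N >-> i <= j}}.
  apply: homo_leq_in => [x|y x z *|i j _ + k' /andP [_ kj]|i _ ib]; rewrite ?inE; [lra|lra|lia|].
  have ibR : INR i + 1 <= INR b by rewrite -S_INR; apply: INR_leq.
  have AB : (INR i + 1) * (1 - p) <= (INR n - INR i) * p by nra.
  have B_gt0 : 0 < (INR n - INR i) * p by nra.
  apply: (Rmult_le_reg_r _ _ _ B_gt0).
  have := step i (leq_trans ib (ltnW bn)); have := f_ge0 i.+1; nra.
have down : {in [pred i | b <= i <= n]%N &, {homo f : i j / (i <= j)%N >-> j <= i}}.
  apply: homo_leq_in => [x|y x z *|i j + + k' /andP [ik kj]|i /andP [bi _] /andP [_ iSn]];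
    rewrite ?inE; [lra|lra|lia|].
  have biR : INR b <= INR i by apply: INR_leq.
  have iR := pos_INR i.
  have AB : (INR n - INR i) * p <= (INR i + 1) * (1 - p) by nra.
  have A_gt0 : 0 < (INR i + 1) * (1 - p) by nra.
  apply: (Rmult_le_reg_r _ _ _ A_gt0).
  have := step i iSn; have := f_ge0 i; nra.
have [kb | bk] := leqP k b; first by apply: up; rewrite ?inE.
by apply: down; rewrite ?inE ?leqnn ?(ltnW bk) ?kn ?(ltnW bn).
Qed.

Lemma ln_le a b : 0 < a -> a <= b -> ln a <= ln b.
Proof. by move=> a_gt0 [ab | <-]; [apply/Rlt_le/ln_increasing | apply: Rle_refl]. Qed.

Lemma ln_le_sub1 y : 0 < y -> ln y <= y - 1.
Proof. by move=> y_gt0; have := exp_ineq1_le (ln y); rewrite exp_ln //; lra. Qed.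

Lemma ln2_gt0 : 0 < ln 2.
Proof. by have := ln_lt_2; lra. Qed.

Definition entropy_ln (p : R) : R := - p * ln p - (1 - p) * ln (1 - p).

Lemma Hb_entropy_ln x : Hb x = entropy_ln x / ln 2.
Proof. by rewrite /Hb /entropy_ln /log2; field; have := ln2_gt0; lra. Qed.

Lemma entropy_ln_sym x : entropy_ln (1 - x) = entropy_ln x.
Proof. by rewrite /entropy_ln (_ : 1 - (1 - x) = x); ring. Qed.

Lemma ln_bin_mass p n k : 0 < p < 1 -> (k <= n)%N ->
  ln (bin_mass p n k) = ln (INR 'C(n, k)) + INR k * ln p + INR (n - k) * ln (1 - p).
Proof.
move=> p01 kn; have C_gt0 : 0 < INR 'C(n, k) by apply: INR_gt0; rewrite bin_gt0.
have pk_gt0 : 0 < p ^ k by apply: pow_lt; lra.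
have qk_gt0 : 0 < (1 - p) ^ (n - k) by apply: pow_lt; lra.
rewrite /bin_mass !ln_mult ?ln_pow //; try lra; exact: Rmult_lt_0_compat.
Qed.

Lemma ln_binomial_le p n k : 0 < p < 1 -> (k <= n)%N ->
  ln (INR 'C(n, k)) + INR k * ln p + INR (n - k) * ln (1 - p) <= 0.
Proof.
move=> p01 kn; rewrite -ln_bin_mass // -ln_1.
apply: ln_le; [exact: bin_mass_gt0 | apply: bin_mass_le1 => //; lra].
Qed.

Lemma ln_binomial_bounds n b : (0 < b)%N -> (b < n)%N ->
  INR n * entropy_ln (INR b / INR n) - ln (INR n + 1) <= ln (INR 'C(n, b))
  <= INR n * entropy_ln (INR b / INR n).
Proof.
move=> b_gt0 bn.
have n_gt0 : 0 < INR n by apply: INR_gt0; lia.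
have bR : 0 < INR b := INR_gt0 b_gt0.
have bnR : INR b < INR n by apply: lt_INR; apply/ltP.
set p := INR b / INR n.
have np : INR n * p = INR b by rewrite /p; field; lra.
have p01 : 0 < p < 1.
  split; first by apply: Rdiv_lt_0_compat.
  by apply: (Rmult_lt_reg_l (INR n)); lra.
have n_entropy : INR b * ln p + INR (n - b) * ln (1 - p) = - (INR n * entropy_ln p).
  by rewrite INR_subn ?(ltnW bn) // -np /entropy_ln; ring.
have := ln_binomial_le p01 (ltnW bn); split; last by lra.
have mass_ge : / (INR n + 1) <= bin_mass p n b.
  have := sum_Rle _ (fun _ => bin_mass p n b) n
    (fun k kn => bin_mass_mode b_gt0 bn (introT leP kn)).
  rewrite bin_mass_sum sum_cte S_INR => sum_le.
  apply: (Rmult_le_reg_l (INR n + 1)); first lra.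
  by rewrite Rinv_r; lra.
have := ln_le (Rinv_0_lt_compat _ (ltac:(lra) : 0 < INR n + 1)) mass_ge.
by rewrite ln_Rinv ?ln_bin_mass ?(ltnW bn) //; lra.
Qed.

Lemma cv_const c : Un_cv (fun _ => c) c.
Proof. by move=> e e_gt0; exists 0%nat => n _; rewrite /R_dist Rminus_diag Rabs_R0. Qed.

Lemma cv_squeeze (a c : nat -> R) l N0 :
  (forall n, (N0 <= n)%N -> Rabs (a n - l) <= c n) -> Un_cv c 0 -> Un_cv a l.
Proof.
move=> ac c0 e e_gt0; have [N cN] := c0 e e_gt0; exists (maxn N N0) => n /leP.
rewrite geq_max => /andP [/leP Nn N0n]; have := cN n Nn; have := ac n N0n.
by rewrite /R_dist Rminus_0_r; have := Rle_abs (c n); lra.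
Qed.

Lemma cv_abs_sub (a : nat -> R) l : Un_cv a l -> Un_cv (fun n => Rabs (a n - l)) 0.
Proof.
move=> a_l e e_gt0; have [M aM] := a_l e e_gt0; exists M => n Mn.
by rewrite /R_dist Rminus_0_r Rabs_Rabsolu; apply: aM.
Qed.

Lemma cv_eventually_eq (a b : nat -> R) l N :
  (forall n, (N <= n)%N -> a n = b n) -> Un_cv a l -> Un_cv b l.
Proof.
move=> ab /cv_abs_sub; apply: (cv_squeeze (N0 := N)) => n Nn.
by rewrite ab //; apply: Rle_refl.
Qed.

Lemma Rabs_div_sub_le x l d c : 0 < d -> Rabs (x - l * d) <= c -> Rabs (x / d - l) <= c / d.
Proof.
move=> d_gt0 le; rewrite (_ : x / d - l = (x - l * d) / d); last by field; lra.
rewrite /Rdiv Rabs_mult (Rabs_pos_eq (/ d)); last by left; apply: Rinv_0_lt_compat.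
by apply: Rmult_le_compat_r => //; left; apply: Rinv_0_lt_compat.
Qed.

Definition diverges (w : nat -> nat) :=
  forall K, exists N, forall n, (N <= n)%N -> (K <= w n)%N.

Lemma cv_comp_diverges (h : nat -> R) l (w : nat -> nat) :
  Un_cv h l -> diverges w -> Un_cv (fun n => h (w n)) l.
Proof.
move=> h_l w_oo e e_gt0; have [K hK] := h_l e e_gt0; have [N wN] := w_oo K.
by exists N => n /leP Nn; apply: hK; apply/leP; apply: wN.
Qed.

Lemma cv_inv_INR : Un_cv (fun n => / INR n) 0.
Proof.
move=> e e_gt0; have [N NeR] := INR_archimed e 1 e_gt0.
exists N.+1 => n /leP Nn; have := INR_leq Nn; rewrite S_INR => NnR.
have N_ge0 := pos_INR N.
rewrite /R_dist Rminus_0_r Rabs_pos_eq; last by left; apply: Rinv_0_lt_compat; lra.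
apply: (Rmult_lt_reg_r (INR n)); first lra.
rewrite Rinv_l; last lra.
by apply: (Rlt_le_trans _ (INR N * e)) => //; rewrite Rmult_comm; apply: Rmult_le_compat_l; lra.
Qed.

Lemma cv_ln_succ_div : Un_cv (fun n => ln (INR n + 1) / INR n) 0.
Proof.
move=> e e_gt0.
(* [ln (y / k) <= y / k - 1] with [k = 4 / e] bounds [ln (n + 1)] by [e n / 2] plus a constant. *)
set k := 4 / e.
have k_gt0 : 0 < k by apply: Rdiv_lt_0_compat; lra.
have [N HN] := INR_archimed (e / 2) (Rabs (ln k) + 1) (ltac:(lra)).
exists N.+1 => n /leP Nn; have := INR_leq Nn; rewrite S_INR => NnR.
have N_ge0 := pos_INR N.
have ln_ge0 : 0 <= ln (INR n + 1) by rewrite -ln_1; apply: ln_le; lra.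
rewrite /R_dist Rminus_0_r Rabs_pos_eq; last first.
  by apply: Rmult_le_pos => //; left; apply: Rinv_0_lt_compat; lra.
have ln_bound : ln (INR n + 1) <= (INR n + 1) / k - 1 + ln k.
  have := ln_le_sub1 (ltac:(apply: Rdiv_lt_0_compat; lra) : 0 < (INR n + 1) / k).
  rewrite /Rdiv ln_mult ?ln_Rinv //; try lra; exact: Rinv_0_lt_compat.
apply: (Rmult_lt_reg_r (INR n)); first lra.
rewrite /Rdiv Rmult_assoc Rinv_l ?Rmult_1_r; last lra.
have : (INR n + 1) / k <= e / 2 * INR n.
  rewrite (_ : e / 2 * INR n = 2 * INR n / k); last by rewrite /k; field; lra.
  by rewrite /Rdiv; apply: Rmult_le_compat_r; [left; apply: Rinv_0_lt_compat | lra].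
have : Rabs (ln k) + 1 < e / 2 * INR n.
  apply: (Rlt_le_trans _ (INR N * (e / 2))) => //.
  by rewrite Rmult_comm; apply: Rmult_le_compat_l; lra.
by have := Rle_abs (ln k); lra.
Qed.

Lemma cv_ln (u : nat -> R) l : 0 < l -> Un_cv u l -> Un_cv (fun n => ln (u n)) (ln l).
Proof.
move=> l_gt0; apply: continuity_seq; apply: derivable_continuous_pt.
exact: (exist _ _ (derivable_pt_lim_ln l l_gt0)).
Qed.

Lemma cv_Hb (u : nat -> R) l : 0 < l < 1 -> Un_cv u l -> Un_cv (fun n => Hb (u n)) (Hb l).
Proof.
move=> l01 u_l; rewrite Hb_entropy_ln.
apply: (cv_eventually_eq (N := 0%N) (a := fun n => entropy_ln (u n) * / ln 2)).
  by move=> n _; rewrite Hb_entropy_ln.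
apply: CV_mult; last exact: cv_const.
have v_l : Un_cv (fun n => 1 - u n) (1 - l) by apply: CV_minus => //; apply: cv_const.
apply: CV_minus; last by apply: CV_mult => //; apply: cv_ln => //; lra.
by have := CV_mult _ _ _ _ (CV_opp _ _ u_l) (cv_ln (proj1 l01) u_l).
Qed.

Definition floor_nat (r : R) : nat := Z.to_nat (Int_part r).

Lemma floor_natP r : 0 <= r -> INR (floor_nat r) <= r < INR (floor_nat r) + 1.
Proof.
move=> r_ge0; have [lo hi] := base_Int_part r.
have gtm1 : (-1 < Int_part r)%Z by apply: lt_IZR; lra.
have ge0 : (0 <= Int_part r)%Z by lia.
by rewrite /floor_nat INR_IZR_INZ Z2Nat.id //; lra.
Qed.

Section FloorMultiple.
Variable lam : R.
Hypothesis lam_ge0 : 0 <= lam.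

Let fl n := floor_nat (lam * INR n).

Lemma floor_natP_mul n : INR (fl n) <= lam * INR n < INR (fl n) + 1.
Proof. by apply: floor_natP; apply: Rmult_le_pos => //; apply: pos_INR. Qed.

Lemma floor_nat_mul_le n : lam <= 1 -> (fl n <= n)%N.
Proof.
move=> lam_le1; apply/leP/INR_le; have := floor_natP_mul n; have := pos_INR n; nra.
Qed.

Lemma cv_floor_nat_div : Un_cv (fun n => INR (fl n) / INR n) lam.
Proof.
apply: (cv_squeeze (c := fun n => 1 / INR n) (N0 := 1%N)) => [n /INR_gt0 n_gt0 |].
  by apply: Rabs_div_sub_le => //; have := floor_natP_mul n => fl_bd; apply: Rabs_le; lra.
by rewrite -(Rmult_0_r 1); apply: CV_mult; [exact: cv_const | exact: cv_inv_INR].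
Qed.

Lemma floor_nat_mul_diverges : 0 < lam -> diverges fl.
Proof.
move=> lam_gt0 K; have [N HN] := INR_archimed lam (INR K + 1) lam_gt0.
exists N => n Nn; apply/leP/INR_le.
by have := INR_leq Nn; have := floor_natP_mul n; have := pos_INR N; nra.
Qed.

End FloorMultiple.

Lemma log2_exp2 e : log2 (INR (2 ^ e)%N) = INR e.
Proof.
have l2 := ln2_gt0; rewrite /log2 INR_expn (_ : INR 2 = 2) /=; last lra.
by rewrite ln_pow; [field | ]; lra.
Qed.

Lemma trunc_log2_le n : (0 < n)%N -> INR (trunc_log 2 n) <= ln (INR n + 1) / ln 2.
Proof.
move=> n_gt0; have l2 := ln2_gt0.
apply: (Rmult_le_reg_r (ln 2)) => //; rewrite /Rdiv Rmult_assoc Rinv_l ?Rmult_1_r; last lra.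
rewrite -ln_pow; last lra.
apply: ln_le; first by apply: pow_lt; lra.
have := INR_leq (trunc_logP (isT : (1 < 2)%N) n_gt0).
by rewrite INR_expn (_ : INR 2 = 2) /=; lra.
Qed.

(** * Achievable rates *)

Definition achievable (r1 r2 : R) : Prop :=
  exists M1 M2 : nat -> nat, (forall n, feasible_vec G1 G2 n (M1 n) (M2 n)) /\
    Un_cv (fun n => log2 (INR (M1 n)) / INR n) r1 /\
    Un_cv (fun n => log2 (INR (M2 n)) / INR n) r2.

Section EntropyCode.
Variable beta : R.
Hypothesis beta01 : 0 < beta < 1.

Let b n := floor_nat (beta * INR n).
(* The slack [trunc_log 2 n + 2] is what the union bound of [feasible_vec_binomial] needs. *)
Let e n := (n - b n - (trunc_log 2 n + 2))%N.

Lemma cv_log2_binomial : Un_cv (fun n => log2 (INR 'C(n, b n)) / INR n) (Hb beta).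
Proof.
have l2 := ln2_gt0.
pose p n := INR (b n) / INR n.
have [N b_ge1] := floor_nat_mul_diverges (ltac:(lra) : 0 <= beta) (proj1 beta01) 1%N.
apply: (cv_squeeze (N0 := maxn N 1)
  (c := fun n => ln (INR n + 1) / INR n / ln 2 + Rabs (Hb (p n) - Hb beta))).
  move=> n; rewrite geq_max => /andP [Nn /INR_gt0 n_gt0].
  have [lo hi] := floor_natP_mul (ltac:(lra) : 0 <= beta) n; rewrite -/(b n) in lo hi.
  have bn : (b n < n)%N by apply/ltP/INR_lt; nra.
  have [C_lo C_hi] := ln_binomial_bounds (b_ge1 n Nn) bn.
  rewrite -/(b n) -/(p n) in C_lo C_hi.
  rewrite (_ : log2 _ / _ - _ = (log2 (INR 'C(n, b n)) / INR n - Hb (p n)) + (Hb (p n) - Hb beta));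
    last by ring.
  apply: Rle_trans (Rabs_triang _ _) _; apply: Rplus_le_compat_r.
  rewrite (_ : ln (INR n + 1) / INR n / ln 2 = (ln (INR n + 1) / ln 2) / INR n); last by field; lra.
  apply: Rabs_div_sub_le => //; rewrite /log2 Hb_entropy_ln.
  rewrite (_ : _ - _ = (ln (INR 'C(n, b n)) - INR n * entropy_ln (p n)) / ln 2); last by field; lra.
  rewrite /Rdiv Rabs_mult (Rabs_pos_eq (/ ln 2)); last by left; apply: Rinv_0_lt_compat.
  by apply: Rmult_le_compat_r; [left; apply: Rinv_0_lt_compat | apply: Rabs_le; lra].
rewrite (_ : 0 = 0 * / ln 2 + 0); last by ring.
apply: CV_plus; first by apply: CV_mult; [exact: cv_ln_succ_div | exact: cv_const].
by apply/cv_abs_sub/cv_Hb => //; apply: cv_floor_nat_div; lra.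
Qed.

Lemma cv_log2_exp2_slack : Un_cv (fun n => log2 (INR (2 ^ e n)%N) / INR n) (1 - beta).
Proof.
have l2 := ln2_gt0.
apply: (cv_squeeze (N0 := 1%N) (c := fun n => 2 / INR n + ln (INR n + 1) / INR n / ln 2)).
  move=> n n_ge1; rewrite log2_exp2.
  have n_gt0 : 0 < INR n := INR_gt0 n_ge1.
  have [lo hi] := floor_natP_mul (ltac:(lra) : 0 <= beta) n; rewrite -/(b n) in lo hi.
  have bn : (b n <= n)%N by apply: floor_nat_mul_le; lra.
  have e_le : INR (e n) <= INR n - INR (b n) by rewrite -INR_subn //; apply/INR_leq/leq_subr.
  have t_le : INR (trunc_log 2 n + 2) <= 2 + ln (INR n + 1) / ln 2.
    by rewrite INR_addn; have := trunc_log2_le n_ge1; rewrite [INR 2]/=; lra.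
  have e_ge : INR n - INR (b n) - INR (trunc_log 2 n + 2) <= INR (e n).
    have [tle | tgt] := leqP (trunc_log 2 n + 2) (n - b n).
      by rewrite /e !INR_subn //; lra.
    by have := INR_leq (ltnW tgt); rewrite INR_subn //; have := pos_INR (e n); lra.
  have : 0 <= ln (INR n + 1) / ln 2.
    by apply: Rmult_le_pos; [rewrite -ln_1; apply: ln_le; lra | left; apply: Rinv_0_lt_compat].
  rewrite (_ : 2 / INR n + ln (INR n + 1) / INR n / ln 2 = (2 + ln (INR n + 1) / ln 2) / INR n);
    last by field; lra.
  by move=> ln_ge0; apply: Rabs_div_sub_le => //; apply: Rabs_le; lra.
rewrite (_ : 0 = 2 * 0 + 0 * / ln 2); last by ring.
apply: CV_plus; apply: CV_mult; try exact: cv_const; [exact: cv_inv_INR | exact: cv_ln_succ_div].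
Qed.

Lemma feasible_vec_entropy n : feasible_vec G1 G2 n (2 ^ e n) 'C(n, b n).
Proof.
have bn : (b n <= n)%N by apply: floor_nat_mul_le; lra.
apply: feasible_vec_binomial; first by rewrite /e; lia.
move=> e_gt0; rewrite (_ : n - b n - e n = trunc_log 2 n + 2)%N; last by rewrite /e in e_gt0 *; lia.
by have := trunc_log_ltn n (isT : (1 < 2)%N); rewrite addn2 !expnS; lia.
Qed.

Lemma achievable_entropy : achievable (1 - beta) (Hb beta).
Proof.
exists (fun n => 2 ^ e n)%N, (fun n => 'C(n, b n)).
split; [exact: feasible_vec_entropy | split; [exact: cv_log2_exp2_slack | exact: cv_log2_binomial]].
Qed.

End EntropyCode.


Lemma cv_rate_mul (f g u v : nat -> nat) r r' lam mu :
  (forall n, (0 < f n)%N) -> (forall n, (0 < g n)%N) ->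
  Un_cv (fun n => log2 (INR (f n)) / INR n) r -> Un_cv (fun n => log2 (INR (g n)) / INR n) r' ->
  Un_cv (fun n => INR (u n) / INR n) lam -> Un_cv (fun n => INR (v n) / INR n) mu ->
  diverges u -> diverges v ->
  Un_cv (fun n => log2 (INR (f (u n) * g (v n))%N) / INR n) (lam * r + mu * r').
Proof.
move=> f_gt0 g_gt0 f_r g_r u_lam v_mu u_oo v_oo.
have [Nu u_ge1] := u_oo 1%N; have [Nv v_ge1] := v_oo 1%N.
apply: (cv_eventually_eq (N := maxn (maxn Nu Nv) 1)
  (a := fun n => INR (u n) / INR n * (log2 (INR (f (u n))) / INR (u n)) +
                 INR (v n) / INR n * (log2 (INR (g (v n))) / INR (v n)))).
  move=> n; rewrite !geq_max => /andP [/andP [Nun Nvn] n_ge1].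
  have := INR_gt0 (u_ge1 n Nun); have := INR_gt0 (v_ge1 n Nvn); have := INR_gt0 n_ge1.
  have := INR_gt0 (f_gt0 (u n)); have := INR_gt0 (g_gt0 (v n)); have := ln2_gt0.
  by move=> *; rewrite INR_muln /log2 ln_mult //; field; lra.
apply: CV_plus; apply: CV_mult => //.
- exact: (cv_comp_diverges f_r u_oo).
- exact: (cv_comp_diverges g_r v_oo).
Qed.

Lemma achievable_convex a1 a2 c1 c2 lam : achievable a1 a2 -> achievable c1 c2 -> 0 < lam < 1 ->
  achievable (lam * a1 + (1 - lam) * c1) (lam * a2 + (1 - lam) * c2).
Proof.
move=> [M1 [M2 [M_feas [M1_r M2_r]]]] [N1 [N2 [N_feas [N1_r N2_r]]]] lam01.
pose u n := floor_nat (lam * INR n); pose v n := (n - u n)%N.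
have un n : (u n <= n)%N by apply: floor_nat_mul_le; lra.
have vR n : INR (v n) = INR n - INR (u n) by rewrite INR_subn.
have u_lam : Un_cv (fun n => INR (u n) / INR n) lam by apply: cv_floor_nat_div; lra.
have v_lam : Un_cv (fun n => INR (v n) / INR n) (1 - lam).
  apply: (cv_eventually_eq (N := 1%N) (a := fun n => 1 - INR (u n) / INR n)).
    by move=> n /INR_gt0 n_gt0; rewrite vR; field; lra.
  by apply: CV_minus => //; apply: cv_const.
have u_oo : diverges u by apply: floor_nat_mul_diverges; lra.
have v_oo : diverges v.
  move=> K; have [N NK] := INR_archimed (1 - lam) (INR K) (ltac:(lra)).
  exists N => n Nn; apply/leP/INR_le; rewrite vR.
  have [lo _] := floor_natP_mul (ltac:(lra) : 0 <= lam) n.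
  by have := INR_leq Nn; have := pos_INR N; rewrite -/(u n) in lo; nra.
have M_gt0 n : (0 < M1 n)%N /\ (0 < M2 n)%N by case: (M_feas n) => ? [].
have N_gt0 n : (0 < N1 n)%N /\ (0 < N2 n)%N by case: (N_feas n) => ? [].
exists (fun n => M1 (u n) * N1 (v n))%N, (fun n => M2 (u n) * N2 (v n))%N; split.
  by move=> n; have := feasible_vec_mul (M_feas (u n)) (N_feas (v n)); rewrite subnKC.
by split; apply: cv_rate_mul => // n; [case: (M_gt0 n) | case: (N_gt0 n) | case: (M_gt0 n)
  | case: (N_gt0 n)].
Qed.

(** * Supporting lines of the rate region *)

Definition tangent_slope (x : R) : R := (ln x - ln (1 - x)) / ln 2.
Definition tangent_value (x : R) : R := - ln (1 - x) / ln 2.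

Lemma tangent_valueE x : tangent_value x = tangent_slope x * x + Hb x.
Proof.
by rewrite /tangent_value /tangent_slope Hb_entropy_ln /entropy_ln; field; have := ln2_gt0; lra.
Qed.

Lemma tangent_slope_bounds x : 1/2 <= x <= 2/3 -> 0 <= tangent_slope x <= 1.
Proof.
move=> x_bd; have l2 := ln2_gt0.
have lo : ln (1 - x) <= ln x by apply: ln_le; lra.
have hi : ln x <= ln 2 + ln (1 - x) by rewrite -ln_mult; try lra; apply: ln_le; lra.
rewrite /tangent_slope; split.
  by apply: Rmult_le_pos; [lra | left; apply: Rinv_0_lt_compat].
by apply: (Rmult_le_reg_r (ln 2)) => //; rewrite /Rdiv Rmult_assoc Rinv_l; lra.
Qed.

Lemma tangent_slope_gt0 x : 1/2 < x < 1 -> 0 < tangent_slope x.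
Proof.
move=> x_bd; have l2 := ln2_gt0.
have : ln (1 - x) < ln x by apply: ln_increasing; lra.
by move=> lt; apply: Rdiv_lt_0_compat; lra.
Qed.

Lemma feasible_vec_tangent x n m1 m2 : 1/2 <= x <= 2/3 -> feasible_vec G1 G2 n m1 m2 ->
  tangent_slope x * ln (INR m1) + ln (INR m2) <= ln (INR n + 1) - INR n * ln (1 - x).
Proof.
move=> x_bd feas; have [m1_gt0 [m2_gt0 _]] := feas.
have [w wn bound] := feasible_vec_weight_bound feas.
have l2 := ln2_gt0.
have [D_ge0 D_le1] := tangent_slope_bounds x_bd.
set D := tangent_slope x in D_ge0 D_le1 *.
have DE : D * ln 2 = ln x - ln (1 - x) by rewrite /D /tangent_slope; field; lra.
have C_gt0 : 0 < INR 'C(n, w) by apply: INR_gt0; rewrite bin_gt0.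
have n1_gt0 : 0 < INR n + 1 by have := pos_INR n; lra.
have m1R := INR_gt0 m1_gt0; have m2R := INR_gt0 m2_gt0.
have boundR m : (m1 * m2 <= n.+1 * ('C(n, w) * m))%N ->
    ln (INR m1) + ln (INR m2) <= ln (INR n + 1) + ln (INR 'C(n, w)) + ln (INR m).
  move=> /INR_leq; rewrite !INR_muln S_INR => le.
  have nC_gt0 : 0 < (INR n + 1) * INR 'C(n, w) by apply: Rmult_lt_0_compat.
  have m_gt0 : 0 < INR m by have := Rmult_lt_0_compat _ _ m1R m2R; nra.
  by rewrite -!ln_mult //; try apply: Rmult_lt_0_compat => //; apply: ln_le => //; nra.
have A := boundR _ (leq_trans bound (leq_mul (leqnn _) (leq_mul (leqnn _) (geq_minl _ _)))).
have B := boundR _ (leq_trans bound (leq_mul (leqnn _) (leq_mul (leqnn _) (geq_minr _ _)))).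
rewrite INR_expn ln_pow /= in A; last lra.
rewrite (_ : 1 + 1 = 2) in A; last lra.
have U := ln_binomial_le (ltac:(lra) : 0 < 1 - x < 1) wn.
rewrite (_ : 1 - (1 - x) = x) in U; last ring.
have nw : INR w + INR (n - w) = INR n by rewrite -INR_addn subnKC.
have A' := Rmult_le_compat_l _ _ _ D_ge0 A.
have B' := Rmult_le_compat_l _ _ _ (ltac:(lra) : 0 <= 1 - D) B.
have : INR (n - w) * (D * ln 2) = INR (n - w) * (ln x - ln (1 - x)) by rewrite DE.
nra.
Qed.

Lemma feasible_rate_tangent x R1 R2 : 1/2 <= x <= 2/3 -> feasible_rate G1 G2 R1 R2 ->
  tangent_slope x * R1 + R2 <= tangent_value x.
Proof.
move=> x_bd [len [m1 [m2 [feas [len_incr [cv1 cv2]]]]]].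
have len_ge k : (k <= len k)%N by elim: k => // k IH; apply: leq_ltn_trans IH (len_incr k).
have succ_oo : diverges succn by move=> K; exists K => n; apply: leqW.
have len_oo : diverges (fun k => len k.+1).
  by move=> K; exists K => n Kn; apply: leq_trans Kn (leq_trans (leqnSn n) (len_ge _)).
have l2 := ln2_gt0.
set D := tangent_slope x.
(* Shifted by one, since [len 0] may vanish. *)
apply: (Rle_cv_lim
  (Un := fun k => D * (log2 (INR (m1 k.+1)) / INR (len k.+1)) + log2 (INR (m2 k.+1)) / INR (len k.+1))
  (Vn := fun k => ln (INR (len k.+1) + 1) / INR (len k.+1) * / ln 2 + tangent_value x)).
- move=> k; have n_gt0 : 0 < INR (len k.+1) by apply: INR_gt0; apply: leq_trans (len_ge _).
  have := feasible_vec_tangent x_bd (feas k.+1).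
  set n := INR (len k.+1) in n_gt0 * => le.
  rewrite /log2 /tangent_value (_ : forall a b, D * (a / ln 2 / n) + b / ln 2 / n =
    (D * a + b) * / (n * ln 2)); last by move=> a b; field; lra.
  rewrite (_ : ln (n + 1) / n * / ln 2 + - ln (1 - x) / ln 2 =
    (ln (n + 1) - n * ln (1 - x)) * / (n * ln 2)); last by field; lra.
  by apply: Rmult_le_compat_r => //; left; apply: Rinv_0_lt_compat; nra.
- apply: CV_plus; last exact: (cv_comp_diverges cv2 succ_oo).
  by apply: CV_mult; [exact: cv_const | exact: (cv_comp_diverges cv1 succ_oo)].
- rewrite -{2}(Rplus_0_l (tangent_value x)) -(Rmult_0_l (/ ln 2)).
  apply: CV_plus; last exact: cv_const.
  apply: CV_mult; last exact: cv_const.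
  exact: (cv_comp_diverges cv_ln_succ_div len_oo).
Qed.

Lemma feasible_rate_of_achievable r1 r2 : achievable r1 r2 -> feasible_rate G1 G2 r1 r2.
Proof. by case=> M1 [M2 [feas [cv1 cv2]]]; exists id, M1, M2. Qed.

Lemma achievable_swap r1 r2 : achievable r1 r2 -> achievable r2 r1.
Proof.
by case=> M1 [M2 [feas [cv1 cv2]]]; exists M2, M1; split => // n; apply: feasible_vec_swap.
Qed.

Lemma feasible_rate_swap r1 r2 : feasible_rate G1 G2 r1 r2 -> feasible_rate G1 G2 r2 r1.
Proof.
case=> len [m1 [m2 [feas rest]]]; exists len, m2, m1.
by split => [k | ]; [apply: feasible_vec_swap | intuition].
Qed.

Lemma optimal_rate_swap r1 r2 : optimal_rate G1 G2 r1 r2 -> optimal_rate G1 G2 r2 r1.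
Proof.
case=> feas [max1 max2]; split; first exact: feasible_rate_swap.
by split=> r lt /feasible_rate_swap; [apply: max2 | apply: max1].
Qed.

Lemma Hb_half : Hb (1/2) = 1.
Proof.
have l2 := ln2_gt0; rewrite Hb_entropy_ln /entropy_ln (_ : 1 - 1/2 = / 2); last lra.
rewrite (_ : 1/2 = / 2); last lra.
by rewrite ln_Rinv; [field | ]; lra.
Qed.

Lemma Hb_le1 y : 0 < y < 1 -> Hb y <= 1.
Proof.
move=> y01; have l2 := ln2_gt0; rewrite Hb_entropy_ln.
apply: (Rmult_le_reg_r (ln 2)) => //.
rewrite /Rdiv Rmult_assoc Rinv_l ?Rmult_1_r ?Rmult_1_l; last lra.
(* Gibbs: ln (1 / (2 y)) <= 1 / (2 y) - 1, weighted by y and 1 - y. *)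
have a := ln_le_sub1 (ltac:(apply: Rinv_0_lt_compat; lra) : 0 < / (2 * y)).
have b := ln_le_sub1 (ltac:(apply: Rinv_0_lt_compat; lra) : 0 < / (2 * (1 - y))).
rewrite !ln_Rinv ?ln_mult in a b; try lra.
have a' := Rmult_le_compat_l y _ _ (ltac:(lra)) a.
have b' := Rmult_le_compat_l (1 - y) _ _ (ltac:(lra)) b.
rewrite /entropy_ln.
have e1 : y * / (2 * y) = 1/2 by field; lra.
have e2 : (1 - y) * / (2 * (1 - y)) = 1/2 by field; lra.
nra.
Qed.

Lemma ln_two_thirds : ln (2/3) = ln 2 - ln 3 /\ ln (1 - 2/3) = - ln 3.
Proof.
rewrite (_ : 1 - 2/3 = / 3); last lra.
by rewrite /Rdiv ln_mult ?ln_Rinv //; lra.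
Qed.

Lemma Hb_two_thirds : Hb (2/3) = log2 3 - 2/3.
Proof.
have [l23 l13] := ln_two_thirds; have l2 := ln2_gt0.
by rewrite Hb_entropy_ln /entropy_ln l23 l13 /log2; field; lra.
Qed.

Lemma tangent_slope_two_thirds : tangent_slope (2/3) = 1.
Proof.
have [l23 l13] := ln_two_thirds; have l2 := ln2_gt0.
by rewrite /tangent_slope l23 l13; field; lra.
Qed.

Lemma tangent_value_two_thirds : tangent_value (2/3) = log2 3.
Proof.
have [_ l13] := ln_two_thirds; have l2 := ln2_gt0.
by rewrite /tangent_value l13 /log2; field; lra.
Qed.

Lemma log2_3_gt : 4/3 < log2 3.
Proof.
have l2 := ln2_gt0.
have : ln (2 ^ 4) < ln (3 ^ 3) by apply: ln_increasing; rewrite /=; lra.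
rewrite !ln_pow /=; try lra; move=> lt.
apply: (Rmult_lt_reg_r (ln 2)) => //.
by rewrite /log2 (_ : ln 3 / ln 2 * ln 2 = ln 3); [lra | field; lra].
Qed.

Lemma achievable_Hb x : 0 < x < 1 -> achievable x (Hb x).
Proof.
move=> x01; have := achievable_entropy (ltac:(lra) : 0 < 1 - x < 1).
rewrite (_ : 1 - (1 - x) = x); last ring.
by rewrite !Hb_entropy_ln entropy_ln_sym.
Qed.

Lemma optimal_entropy_curve x : 1/2 <= x <= 2/3 -> optimal_rate G1 G2 x (Hb x).
Proof.
move=> x_bd; split; first by apply/feasible_rate_of_achievable/achievable_Hb; lra.
split=> r lt feas; last first.
  by have := feasible_rate_tangent x_bd feas; rewrite tangent_valueE; lra.
(* The slope vanishes at x = 1/2, so there compare with a point slightly to the right. *)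
have [x' [x'_bd [x'r Hb_le]]] : exists x', (1/2 < x' <= 2/3) /\ x' < r /\ Hb x' <= Hb x.
  have [-> | x_gt] := Req_dec x (1/2); last by exists x; split; lra.
  exists (Rmin ((1/2 + r) / 2) (2/3)); rewrite Hb_half.
  have := Rmin_l ((1/2 + r) / 2) (2/3); have := Rmin_r ((1/2 + r) / 2) (2/3).
  have := Rmin_glb_lt _ _ (1/2) (ltac:(lra) : 1/2 < (1/2 + r) / 2) (ltac:(lra) : 1/2 < 2/3).
  move=> *; split; [lra | split; [lra | apply: Hb_le1; lra]].
have := feasible_rate_tangent (ltac:(lra) : 1/2 <= x' <= 2/3) feas.
have := tangent_slope_gt0 (ltac:(lra) : 1/2 < x' < 1).
by rewrite tangent_valueE; nra.
Qed.

Lemma optimal_time_sharing R1 : 2/3 <= R1 <= log2 3 - 2/3 ->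
  optimal_rate G1 G2 R1 (log2 3 - R1).
Proof.
move=> R1_bd; have l3 := log2_3_gt.
set h := log2 3 - 2/3 in R1_bd.
have A0 : achievable (2/3) h by rewrite /h -Hb_two_thirds; apply: achievable_Hb; lra.
have A1 := achievable_swap A0.
have tangent : forall r1 r2, feasible_rate G1 G2 r1 r2 -> r1 + r2 <= log2 3.
  move=> r1 r2 /(feasible_rate_tangent (ltac:(lra) : 1/2 <= 2/3 <= 2/3)).
  by rewrite tangent_slope_two_thirds tangent_value_two_thirds; lra.
split; last by split=> r lt /tangent; lra.
apply: feasible_rate_of_achievable.
have [-> | R1_gt] := Req_dec R1 (2/3); first by [].
have [-> | R1_lt] := Req_dec R1 h; first by rewrite (_ : log2 3 - h = 2/3) //; rewrite /h; ring.
pose lam := (h - R1) / (h - 2/3).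
have lam01 : 0 < lam < 1.
  split; first by apply: Rdiv_lt_0_compat; lra.
  by apply: (Rmult_lt_reg_r (h - 2/3)); [lra | rewrite /lam /Rdiv Rmult_assoc Rinv_l; lra].
have := achievable_convex A0 A1 lam01.
rewrite (_ : lam * (2/3) + (1 - lam) * h = R1); last by rewrite /lam; field; lra.
by rewrite (_ : lam * h + (1 - lam) * (2/3) = log2 3 - R1) // /lam /h; field; rewrite -/h; lra.
Qed.

Theorem proposition16 :
  (forall R1 : R, 1/2 <= R1 <= 2/3 -> optimal_rate G1 G2 R1 (Hb R1)) /\
  (forall R1 : R, 2/3 <= R1 <= log2 3 - 2/3 -> optimal_rate G1 G2 R1 (log2 3 - R1)) /\
  (forall R2 : R, 1/2 <= R2 <= 2/3 -> optimal_rate G1 G2 (Hb R2) R2).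
Proof.
split; first exact: optimal_entropy_curve.
split; first exact: optimal_time_sharing.
by move=> R2 R2_bd; apply/optimal_rate_swap/optimal_entropy_curve.
Qed.
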